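(* Let $\mathcal{M}=(Q,V,I_0,T,F)$ be a polyglot model. Suppose that for every transition $((q,q'),(g,u))\in T$, with $u=\{(d,d')\mid d'=f_k\circ\cdots\circ f_1(d)\}$ where $f_j=(C_j,\mathcal{L}_j)\in F$, we are given for each $j\in\{1,\dots,k\}$ a valid contract $(P_j,Q_j)$ for $f_j$ such that for every $j\in\{1,\dots,k-1\}$, $$\forall d\in D(V).\ [\![Q_j]\!]_{\mathcal{L}_j}(d)\implies [\![P_{j+1}]\!]_{\mathcal{L}_{j+1}}(d).$$ Let $\mathcal{M}'$ be the model obtained from $\mathcal{M}$ by replacing, in every transition, the update relation $u$ by $$u'=\{(a,b)\in D(V)\times D(V)\mid [\![P_1]\!]_{\mathcal{L}_1}(a)\implies [\![Q_k]\!]_{\mathcal{L}_k}(b)\},$$ keeping modes, variables, initial states and guards unchanged. Then for every property $\phi$ (a set of infinite traces over $D(V)$), if $\mathcal{M}'\models\phi$ then $\mathcal{M}\models\phi$.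
   Context: An Extended State Machine (ESM) is a tuple $(Q,V,I_0,T)$: $Q$ a set of modes, $V$ a set of typed variables (with $D(v)$ the domain of $v$ and $D(V)$ the Cartesian product of the domains, i.e. the set of assignments $d$ to $V$), $I_0\subseteq Q\times D(V)$ a set of initial states, and $T\subseteq (Q\times Q)\times(G\times U)$ a set of transitions, each labelled by a guard $g:D(V)\to\mathbb{B}$ and an update relation $u\subseteq D(V)\times D(V)$. An execution starts in an initial state and, from a state $(q,d)$, takes a transition $((q,q'),(g,u))$ with $g(d)$ true and moves to a state $(q',d')$ with $(d,d')\in u$. A trace of an execution is the infinite sequence of assignments $d$ seen along it; $\mathcal{T}(\mathcal{M})$ is the set of all traces of $\mathcal{M}$. A property $\phi$ is a set of traces, and $\mathcal{M}\models\phi$ means $\mathcal{T}(\mathcal{M})\subseteq\phi$. A language $\mathcal{L}$ is a set of terms and predicates over $V$ with fixed interpretations: each term $t$ denotes a function $[\![t]\!]_{\mathcal{L}}:D(V)\to D(V)$ and each predicate $p$ denotes $[\![p]\!]_{\mathcal{L}}:D(V)\to\mathbb{B}$. A procedure is a pair $f=(C,\mathcal{L})$ with $C$ a term of $\mathcal{L}$ (procedures are total and terminating); for procedures, $f_1\circ f_2(d)=[\![C_1]\!]_{\mathcal{L}_1}([\![C_2]\!]_{\mathcal{L}_2}(d))$. A polyglot model is a tuple $(Q,V,I_0,T,F)$ where $(Q,V,I_0,T)$ is an ESM and $F$ is a set of procedures, such that every transition's update relation has the form $u=\{(d,d')\mid d'=f_k\circ\cdots\circ f_1(d)\}$ for some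 $f_i\in F$. A contract for a procedure $(C,\mathcal{L})$ is a pair $(P,Q)$ of predicates of $\mathcal{L}$; it is valid iff $\forall d,d'\in D(V).\ ([\![P]\!]_{\mathcal{L}}(d)\wedge d'=[\![C]\!]_{\mathcal{L}}(d))\implies [\![Q]\!]_{\mathcal{L}}(d')$. *)

From Stdlib Require Import List.
Import ListNotations.
Set Implicit Arguments.

Section Defs.
(* [D] plays the role of D(V): the set of assignments to the variables V. *)
Variable D : Type.

Record language := {
  l_term : Type;
  l_pred : Type;
  l_sem_term : l_term -> D -> D;
  l_sem_pred : l_pred -> D -> bool
}.

Record procedure := { p_lang : language; p_code : l_term p_lang }.

Definition proc_sem (f : procedure) (d : D) : D := @l_sem_term (p_lang f) (p_code f) d.

(** f_k o ... o f_1 (d), for the list [f_1; ...; f_k]. *)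
Definition comp_procs (fs : list procedure) (d : D) : D :=
  fold_left (fun x f => proc_sem f x) fs d.

Record ESM := {
  esm_mode : Type;
  esm_init : esm_mode -> D -> Prop;
  esm_trans : esm_mode -> esm_mode -> (D -> bool) -> (D -> D -> Prop) -> Prop
}.

Definition is_execution (M : ESM) (qs : nat -> esm_mode M) (ds : nat -> D) : Prop :=
  esm_init M (qs 0) (ds 0) /\
  forall i, exists g u, esm_trans M (qs i) (qs (S i)) g u /\
                        g (ds i) = true /\ u (ds i) (ds (S i)).

Definition traces (M : ESM) (t : nat -> D) : Prop :=
  exists qs, is_execution M qs t.

Definition models (M : ESM) (phi : (nat -> D) -> Prop) : Prop :=
  forall t, traces M t -> phi t.

(** Polyglot model (Q, V, I0, T, F): each transition is labelled by a guard
    and the sequence [f_1; ...; f_k] of procedures of F whose composition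
    f_k o ... o f_1 is its update. *)
Record polyglot := {
  pg_mode : Type;
  pg_init : pg_mode -> D -> Prop;
  pg_F : procedure -> Prop;
  pg_trans : pg_mode -> pg_mode -> (D -> bool) -> list procedure -> Prop;
  pg_trans_F : forall q q' g fs, pg_trans q q' g fs -> forall f, In f fs -> pg_F f
}.

Definition update_of (fs : list procedure) : D -> D -> Prop :=
  fun d d' => d' = comp_procs fs d.

Definition pg_esm (M : polyglot) : ESM :=
  {| esm_mode := pg_mode M;
     esm_init := pg_init M;
     esm_trans := fun q q' g u =>
       exists fs, pg_trans M q q' g fs /\ u = update_of fs |}.

Record contracted := {
  c_proc : procedure;
  c_pre : l_pred (p_lang c_proc);
  c_post : l_pred (p_lang c_proc)
}.

Definition sem_pre (c : contracted) (d : D) : bool := @l_sem_pred (p_lang (c_proc c)) (c_pre c) d.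
Definition sem_post (c : contracted) (d : D) : bool := @l_sem_pred (p_lang (c_proc c)) (c_post c) d.

Definition valid_contract (c : contracted) : Prop :=
  forall d d', sem_pre c d = true -> d' = proc_sem (c_proc c) d ->
               sem_post c d' = true.

Fixpoint chained (cs : list contracted) : Prop :=
  match cs with
  | c1 :: ((c2 :: _) as rest) =>
      (forall d, sem_post c1 d = true -> sem_pre c2 d = true) /\ chained rest
  | _ => True
  end.

(** u' = {(a,b) | P_1(a) -> Q_k(b)} (the empty list never occurs under the
    theorem's hypotheses; its value is irrelevant). *)
Definition abstract_update (cs : list contracted) : D -> D -> Prop :=
  match cs with
  | [] => fun _ _ => True
  | c1 :: rest => fun a b => sem_pre c1 a = true -> sem_post (last rest c1) b = true
  end.

Definition abstract_esm (M : polyglot)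
  (ctr : pg_mode M -> pg_mode M -> (D -> bool) -> list procedure -> list contracted)
  : ESM :=
  {| esm_mode := pg_mode M;
     esm_init := pg_init M;
     esm_trans := fun q q' g u =>
       exists fs, pg_trans M q q' g fs /\ u = abstract_update (ctr q q' g fs) |}.

Definition good_contracts (M : polyglot)
  (ctr : pg_mode M -> pg_mode M -> (D -> bool) -> list procedure -> list contracted)
  : Prop :=
  forall q q' g fs, pg_trans M q q' g fs ->
    let cs := ctr q q' g fs in
    cs <> [] /\ map c_proc cs = fs /\ Forall valid_contract cs /\ chained cs.

End Defs.

(** Refining each update f_k o ... o f_1 to the relation P_1(a) -> Q_k(b) only
    enlarges the transition relation: by validity and the chaining condition,
    P_j propagates to Q_j and then to P_{j+1} along the composition, so every
    concrete step (a, f_k o ... o f_1 (a)) is also an abstract step. Modes,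
    initial states and guards are unchanged, hence every execution of M is
    one of M', and every trace of M is a trace of M'. *)

From Stdlib Require Import List.

Lemma last_cons (A : Type) (a d : A) (l : list A) : last (a :: l) d = last l a.
Proof.
  revert a d. induction l as [|x l IH]; intros a d; [reflexivity|].
  change (last (a :: x :: l) d) with (last (x :: l) d).
  now rewrite !IH.
Qed.

Section Refinement.
Variable D : Type.

Lemma traces_simulation (M M' : ESM D) (h : esm_mode M -> esm_mode M') :
  (forall q d, esm_init M q d -> esm_init M' (h q) d) ->
  (forall q q' g u, esm_trans M q q' g u ->
     exists g' u', esm_trans M' (h q) (h q') g' u' /\
       forall d d', g d = true -> u d d' -> g' d = true /\ u' d d') ->
  forall t, traces M t -> traces M' t.
Proof.
  intros Hinit Htrans t [qs [Hq0 Hstep]].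
  exists (fun i => h (qs i)). split; [now apply Hinit|].
  intros i. destruct (Hstep i) as [g [u [Htr [Hg Hu]]]].
  destruct (Htrans _ _ _ _ Htr) as [g' [u' [Htr' Hsim]]].
  destruct (Hsim _ _ Hg Hu) as [Hg' Hu'].
  now exists g', u'.
Qed.

Lemma chained_contracts_compose (c1 : contracted D) (rest : list (contracted D)) a :
  Forall (@valid_contract D) (c1 :: rest) -> chained (c1 :: rest) ->
  sem_pre c1 a = true ->
  sem_post (last rest c1) (comp_procs (map (@c_proc D) (c1 :: rest)) a) = true.
Proof.
  revert c1 a. induction rest as [|c2 r IH]; intros c1 a Hvalid Hchain Hpre;
    inversion Hvalid as [|? ? Hvalid1 Hvalid_rest]; subst.
  - eapply Hvalid1; [exact Hpre|reflexivity].
  - destruct Hchain as [Hpost_pre Hchain].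
    rewrite last_cons.
    change (comp_procs (map (@c_proc D) (c1 :: c2 :: r)) a)
      with (comp_procs (map (@c_proc D) (c2 :: r)) (proc_sem (c_proc c1) a)).
    apply IH; [exact Hvalid_rest|exact Hchain|].
    apply Hpost_pre. eapply Hvalid1; [exact Hpre|reflexivity].
Qed.

Lemma update_of_abstract_update (cs : list (contracted D)) a b :
  Forall (@valid_contract D) cs -> chained cs ->
  update_of (map (@c_proc D) cs) a b -> abstract_update cs a b.
Proof.
  intros Hvalid Hchain ->.
  destruct cs as [|c1 rest]; [exact I|].
  intros Hpre. now apply chained_contracts_compose.
Qed.

End Refinement.

Theorem theorem1 (D : Type) (M : polyglot D)
  (ctr : pg_mode M -> pg_mode M -> (D -> bool) -> list (procedure D) -> list (contracted D))
  (Hctr : @good_contracts D M ctr)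
  (phi : (nat -> D) -> Prop) :
  models (@abstract_esm D M ctr) phi -> models (pg_esm M) phi.
Proof.
  intros Hmodels t Ht. apply Hmodels.
  apply (@traces_simulation D (pg_esm M) (abstract_esm M ctr) (fun q => q));
    [now intros| |exact Ht].
  intros q q' g u [fs [Htr ->]].
  destruct (Hctr _ _ _ _ Htr) as [_ [Hmap [Hvalid Hchain]]].
  exists g, (abstract_update (ctr q q' g fs)).
  split; [now exists fs|].
  intros d d' Hg Hupd. split; [exact Hg|].
  apply update_of_abstract_update; [exact Hvalid|exact Hchain|].
  now rewrite Hmap.
Qed.
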